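(* There is no polynomial-time algorithm that, given a canonical linear game on players $\{1,\dots,n\}$ as the list of characteristic vectors of its ceiling coalitions, outputs the list of its roof coalitions; and there is no polynomial-time algorithm that, given a canonical linear game as the list of its roof coalitions, outputs the list of its ceiling coalitions. (Here polynomial time means polynomial in the size of the input list.)
   Context: A simple game on $N=\{1,\dots,n\}$ is a map $v:2^N\to\{0,1\}$; it is monotonic if $S\subseteq T\Rightarrow v(S)\le v(T)$. Write $i\succeq j$ if $v(S\cup\{i\})\ge v(S\cup\{j\})$ for all $S\subseteq N\setminus\{i,j\}$; a canonical linear game is a monotonic simple game with $1\succeq2\succeq\cdots\succeq n$. A coalition $S'$ is a direct left-shift of $S$ if there is $m\in S$, $2\le m\le n$, $m-1\notin S$, with $S'=(S\setminus\{m\})\cup\{m-1\}$; a left-shift is obtained by one or more successive direct left-shifts; right-shifts are defined symmetrically. A roof coalition is a minimal winning coalition all of whose right-shifts are losing; a ceiling coalition is a maximal losing coalition all of whose left-shifts are winning. A canonical linear game is determined by its list of roofs, and also by its list of ceilings. A coalition $S$ is encoded by its characteristic vector in $\{0,1\}^n$. *)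

From mathcomp Require Import all_boot.
Set Implicit Arguments. Unset Strict Implicit. Unset Printing Implicit Defensive.

(* Simple games on N = {1,..,n}; player i is represented by the ordinal
   i-1 : 'I_n, so the order 1,2,...,n is the order of 'I_n.            *)

Definition monotonic_game n (v : {set 'I_n} -> bool) : Prop :=
  forall S T : {set 'I_n}, S \subset T -> v S <= v T.

Definition desirable n (v : {set 'I_n} -> bool) (i j : 'I_n) : Prop :=
  forall S : {set 'I_n}, S \subset ~: [set i; j] ->
    v (j |: S) <= v (i |: S).

Definition canonical_linear_game n (v : {set 'I_n} -> bool) : Prop :=
  monotonic_game v /\ forall i j : 'I_n, i <= j -> desirable v i j.

Definition direct_left_shift n (S S' : {set 'I_n}) : bool :=
  [exists m : 'I_n, exists m' : 'I_n,
    [&& m'.+1 == m :> nat, m \in S, m' \notin S & S' == m' |: (S :\ m)]].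

Definition direct_right_shift n (S S' : {set 'I_n}) : bool :=
  [exists m : 'I_n, exists m' : 'I_n,
    [&& m.+1 == m' :> nat, m \in S, m' \notin S & S' == m' |: (S :\ m)]].

Definition left_shift n (S S' : {set 'I_n}) : Prop :=
  exists T : {set 'I_n}, direct_left_shift S T /\ connect (@direct_left_shift n) T S'.
Definition right_shift n (S S' : {set 'I_n}) : Prop :=
  exists T : {set 'I_n}, direct_right_shift S T /\ connect (@direct_right_shift n) T S'.

Definition minimal_winning n (v : {set 'I_n} -> bool) (S : {set 'I_n}) : Prop :=
  v S /\ forall T : {set 'I_n}, T \proper S -> ~~ v T.
Definition maximal_losing n (v : {set 'I_n} -> bool) (S : {set 'I_n}) : Prop :=
  ~~ v S /\ forall T : {set 'I_n}, S \proper T -> v T.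

Definition roof n (v : {set 'I_n} -> bool) (S : {set 'I_n}) : Prop :=
  minimal_winning v S /\ forall S' : {set 'I_n}, right_shift S S' -> ~~ v S'.
Definition ceiling n (v : {set 'I_n} -> bool) (S : {set 'I_n}) : Prop :=
  maximal_losing v S /\ forall S' : {set 'I_n}, left_shift S S' -> v S'.

(* A machine has states 'I_q.+1 (start state ord0) and tape alphabet
   'I_k.+4, where 0 = blank, 1 = bit '0', 2 = bit '1', 3 = separator.
   delta st a = None means "halt"; Some (st', w, mv) writes w, enters
   st' and moves right if mv, left otherwise.                          *)

Section TM.
Variables q k : nat.
Definition sym := 'I_k.+4.
Definition blank : sym := ord0.
Definition bit0 : sym := inord 1.
Definition bit1 : sym := inord 2.
Definition sepr : sym := inord 3.

Definition tm_delta := 'I_q.+1 -> sym -> option ('I_q.+1 * sym * bool).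

(* configuration: state, left part (reversed), scanned cell, right part *)
Definition config := ('I_q.+1 * seq sym * sym * seq sym)%type.

Definition tm_step (delta : tm_delta) (cf : config) : option config :=
  let: (st, l, c, r) := cf in
  match delta st c with
  | None => None
  | Some (st', w, mv) =>
      Some (if mv then (st', w :: l, head blank r, behead r)
            else (st', behead l, head blank l, w :: r))
  end.

(* run with fuel: Some cf iff the machine halts in configuration cf after
   fewer than fuel steps *)
Fixpoint tm_run (delta : tm_delta) (fuel : nat) (cf : config) : option config :=
  match fuel with
  | 0 => None
  | f.+1 => match tm_step delta cf with
            | None => Some cf
            | Some cf' => tm_run delta f cf'
            end
  end.

Definition tm_init (w : seq sym) : config := (ord0, [::], head blank w, behead w).

Definition drop_blanks (s : seq sym) := drop (find (fun x => x != blank) s) s.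
Definition strip_blanks (s : seq sym) := rev (drop_blanks (rev (drop_blanks s))).

Definition tm_output (cf : config) : seq sym :=
  let: (_, l, c, r) := cf in strip_blanks (rev l ++ c :: r).

Definition enc_set n (S : {set 'I_n}) : seq sym :=
  [seq (if i \in S then bit1 else bit0) | i <- enum 'I_n] ++ [:: sepr].
Definition enc_list n (s : seq {set 'I_n}) : seq sym :=
  flatten [seq enc_set X | X <- s].
Definition enc_input n (s : seq {set 'I_n}) : seq sym :=
  nseq n bit1 ++ sepr :: enc_list s.

Definition poly_time_converts
    (inP outP : forall n, ({set 'I_n} -> bool) -> {set 'I_n} -> Prop)
    (delta : tm_delta) (c d : nat) : Prop :=
  forall n (v : {set 'I_n} -> bool), canonical_linear_game v ->
  forall s : seq {set 'I_n}, uniq s -> (forall X, X \in s <-> inP n v X) ->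
  exists t, t <= c * (size (enc_input s)).+1 ^ d /\
  exists cf, tm_run delta t.+1 (tm_init (enc_input s)) = Some cf /\
  exists s' : seq {set 'I_n}, uniq s' /\ (forall X, X \in s' <-> outP n v X) /\
    tm_output cf = enc_list s'.
End TM.

From mathcomp Require Import all_boot zify.
From Stdlib Require Import Classical.
Set Implicit Arguments. Unset Strict Implicit. Unset Printing Implicit Defensive.

(* Order coalitions by prefix counts: S <= T when every initial segment
   {0, ..., k-1} of the players meets T in at least as many players as S.
   Enlarging a coalition or shifting it left goes up in this order, and
   conversely every strict predecessor of S lies below a proper subset or a
   direct right shift of S. Hence, for any family A, "S lies above a member of
   A" is a canonical linear game whose roofs belong to A, and "S lies below no
   complement of a member of A" is one whose ceilings are complements of
   members of A. For n = 4p there is a family of 3p coalitions together with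
   2^p coalitions, one per bit string of length p, that are ceilings of the
   first game and whose complements are roofs of the second. A Turing machine
   writes at most one cell per step, so it cannot output 2^p coalitions within
   time polynomial in an input of O(p^2) symbols. *)

Lemma leq_bool (a b : bool) : (a -> b) -> a <= b.
Proof. by case: a; case: b => // /(_ isT). Qed.

Lemma ex_maxn_le (P : pred nat) m : (exists i, P i) -> (forall i, P i -> i <= m) ->
  exists2 i, P i & forall j, P j -> j <= i.
Proof. by move=> exP ubP; case: (ex_maxnP exP ubP) => i Pi maxi; exists i. Qed.

Section PrefixCount.
Variable n : nat.
Implicit Types S T g : {set 'I_n}.

Definition mem_nat S (j : nat) : bool := [exists i in S, val i == j].

Lemma mem_nat_ord S (i : 'I_n) : mem_nat S i = (i \in S).
Proof.
apply/existsP/idP => [[i' /andP[i'S /eqP/val_inj <-]] //|iS].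
by exists i; rewrite iS eqxx.
Qed.

Lemma mem_nat_ge S j : n <= j -> mem_nat S j = false.
Proof.
move=> nj; apply/existsP => -[i /andP[_ /eqP ij]].
by move: (ltn_ord i); rewrite -[nat_of_ord i]/(val i) ij ltnNge nj.
Qed.

Lemma mem_nat_subset S T j : S \subset T -> mem_nat S j -> mem_nat T j.
Proof.
by move=> /subsetP ST /existsP[i /andP[iS ij]]; apply/existsP; exists i; rewrite ST.
Qed.

Lemma mem_natU1 x S j : mem_nat (x |: S) j = (nat_of_ord x == j) || mem_nat S j.
Proof.
apply/existsP/orP => [[i /andP[]]|].
  rewrite in_setU1 => /orP[/eqP -> xj|iS ij]; first by left.
  by right; apply/existsP; exists i; rewrite iS ij.
case=> [xj|/existsP[i /andP[iS ij]]]; first by exists x; rewrite setU11 xj.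
by exists i; rewrite setU1r ?ij.
Qed.

Lemma mem_natC S j : mem_nat (~: S) j = (j < n) && ~~ mem_nat S j.
Proof.
case: (ltnP j n) => jn /=; last by rewrite mem_nat_ge.
by rewrite -[j]/(val (Ordinal jn)) !mem_nat_ord in_setC.
Qed.

Fixpoint prefix_count S k :=
  if k is k'.+1 then prefix_count S k' + mem_nat S k' else 0.

Lemma prefix_countS S k : prefix_count S k.+1 = prefix_count S k + mem_nat S k.
Proof. by []. Qed.

Lemma leq_prefix_count S k k' : k <= k' -> prefix_count S k <= prefix_count S k'.
Proof.
elim: k' => [|k' IH]; first by rewrite leqn0 => /eqP->.
by rewrite leq_eqVlt => /orP[/eqP-> //|/IH]; rewrite prefix_countS; lia.
Qed.

Lemma prefix_countS_leq S k : prefix_count S k.+1 <= (prefix_count S k).+1.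
Proof. by rewrite prefix_countS; case: (mem_nat S k); lia. Qed.

Lemma prefix_count_inj S T :
  (forall k, k <= n -> prefix_count S k = prefix_count T k) -> S = T.
Proof.
move=> eqST; apply/setP => i; rewrite -!mem_nat_ord.
move: (eqST i.+1 (ltn_ord i)) (eqST i (ltnW (ltn_ord i))); rewrite !prefix_countS.
by case: (mem_nat S i); case: (mem_nat T i) => /=; lia.
Qed.

Lemma prefix_countU1 x S k :
  x \notin S -> prefix_count (x |: S) k = prefix_count S k + (nat_of_ord x < k).
Proof.
move=> xS; elim: k => [|k IH] //=.
rewrite IH mem_natU1; case: (eqVneq (nat_of_ord x) k) => [<-|xk] /=.
  by rewrite mem_nat_ord (negbTE xS) ltnn leqnn; lia.
by rewrite [x < k.+1]ltnS [x <= k]leq_eqVlt (negbTE xk) /=; lia.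
Qed.

Lemma prefix_countD1 x S k :
  x \in S -> prefix_count S k = prefix_count (S :\ x) k + (nat_of_ord x < k).
Proof. by move=> xS; rewrite -prefix_countU1 ?setD11 // setD1K. Qed.

Lemma prefix_countC S k : k <= n -> prefix_count (~: S) k + prefix_count S k = k.
Proof.
elim: k => //= k IH kn; rewrite mem_natC kn /=; move: (IH (ltnW kn)).
by case: (mem_nat S k) => /=; lia.
Qed.

Lemma prefix_count_const S a b : a <= b ->
  (forall j, a <= j < b -> mem_nat S j = false) -> prefix_count S b = prefix_count S a.
Proof.
elim: b => [|b IH]; first by rewrite leqn0 => /eqP ->.
rewrite leq_eqVlt => /orP[/eqP -> //|ab] Sout.
rewrite prefix_countS Sout ?IH //; first lia.
  by move=> j /andP[aj jb]; apply: Sout; rewrite aj /=; lia.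
by rewrite -ltnS ab leqnn.
Qed.

Lemma prefix_count_gt0 S k : 0 < prefix_count S k -> exists2 j, j < k & mem_nat S j.
Proof.
elim: k => //= k IH; case Sk: (mem_nat S k) => /=; first by exists k.
by rewrite addn0 => /IH [j jk Sj]; exists j => //; lia.
Qed.

Definition shift_le S T := forall k, k <= n -> prefix_count S k <= prefix_count T k.

Lemma shift_le_trans S T U : shift_le S T -> shift_le T U -> shift_le S U.
Proof. by move=> ST TU k kn; exact: leq_trans (ST k kn) (TU k kn). Qed.

Lemma shift_le_anti S T : shift_le S T -> shift_le T S -> S = T.
Proof. by move=> ST TS; apply: prefix_count_inj => k kn; apply/eqP; rewrite eqn_leq ST ?TS. Qed.

Lemma shift_lt_witness S T : shift_le S T -> S != T ->
  exists2 k, k <= n & prefix_count S k < prefix_count T k.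
Proof.
move=> ST; case: (boolP [exists k : 'I_n.+1, prefix_count S k < prefix_count T k]).
  by case/existsP => k STk _; exists k; first by rewrite -ltnS ltn_ord.
move/existsPn => STeq; move/eqP; case; apply: prefix_count_inj => k kn.
by apply/eqP; rewrite eqn_leq ST // leqNgt (negbTE (STeq (Ordinal (n:=n.+1) (m:=k) kn))).
Qed.

Lemma last_mem_shiftable S k : mem_nat S k = false -> 0 < prefix_count S k ->
  exists j, [/\ j < k, mem_nat S j, mem_nat S j.+1 = false
               & prefix_count S k = prefix_count S j.+1].
Proof.
move=> Sk Sk_gt0; have [j0 j0k Sj0] := prefix_count_gt0 Sk_gt0.
have [j /andP[jk Sj] jmax] := @ex_maxn_le (fun j => (j < k) && mem_nat S j) k
  (ex_intro _ j0 (introT andP (conj j0k Sj0))) (fun i h => ltnW (proj1 (andP h))).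
exists j; split=> //.
  case: (ltnP j.+1 k) => j1k; last by have -> : j.+1 = k by lia.
  by apply/negbTE/negP => Sj1; have := jmax j.+1; rewrite j1k Sj1 => /(_ isT); lia.
apply: prefix_count_const => // i /andP[ji ik]; apply/negbTE/negP => Si.
by have := jmax i; rewrite ik Si => /(_ isT); lia.
Qed.

Lemma subset_shift_le S T : S \subset T -> shift_le S T.
Proof.
move=> ST k _; elim: k => //= k IH.
by move: (@mem_nat_subset S T k ST); case: (mem_nat S k); case: (mem_nat T k) => //=; lia.
Qed.

Lemma shift_leC S T : shift_le S T -> shift_le (~: T) (~: S).
Proof. by move=> ST k kn; move: (prefix_countC S kn) (prefix_countC T kn) (ST k kn); lia. Qed.

End PrefixCount.

Section Shifts.
Variable n : nat.
Implicit Types S T g : {set 'I_n}.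

Lemma direct_right_shift_le S S' :
  direct_right_shift S S' -> shift_le S' S /\ S' != S.
Proof.
move=> /existsP[m /existsP[m' /and4P[/eqP mm' mS m'S /eqP ->]]]; split.
  move=> k _; rewrite (prefix_countD1 k mS) prefix_countU1; last first.
    by rewrite in_setD1 negb_and m'S orbT.
  by rewrite leq_add2l; apply: leq_bool; rewrite -mm'; lia.
apply/eqP => eqS; have : m \in m' |: (S :\ m) by rewrite eqS.
by rewrite in_setU1 in_setD1 eqxx andFb orbF => /eqP mE; move: mm'; rewrite mE; lia.
Qed.

Lemma direct_left_shift_le S S' :
  direct_left_shift S S' -> shift_le S S' /\ S' != S.
Proof.
move=> /existsP[m /existsP[m' /and4P[/eqP m'm mS m'S /eqP ->]]]; split.
  move=> k _; rewrite (prefix_countD1 k mS) prefix_countU1; last first.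
    by rewrite in_setD1 negb_and m'S orbT.
  by rewrite leq_add2l; apply: leq_bool; rewrite -m'm; lia.
apply/eqP => eqS; have : m' \in m' |: (S :\ m) by rewrite setU11.
by rewrite eqS (negbTE m'S).
Qed.

Lemma connect_right_shift_le T U :
  connect (@direct_right_shift n) T U -> shift_le U T.
Proof.
move=> /connectP[p]; elim: p T => [|a p IH] T /=; first by move=> _ ->.
move=> /andP[Ta ap] Ulast; apply: shift_le_trans (IH _ ap Ulast) _.
exact: (direct_right_shift_le Ta).1.
Qed.

Lemma connect_left_shift_le T U :
  connect (@direct_left_shift n) T U -> shift_le T U.
Proof.
move=> /connectP[p]; elim: p T => [|a p IH] T /=; first by move=> _ ->.
move=> /andP[Ta ap] Ulast; apply: shift_le_trans _ (IH _ ap Ulast).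
exact: (direct_left_shift_le Ta).1.
Qed.

Lemma right_shift_lt S S' : right_shift S S' -> shift_le S' S /\ S' != S.
Proof.
move=> [T [ST TS']]; have [TleS TneS] := direct_right_shift_le ST.
have S'leT := connect_right_shift_le TS'.
split; first exact: shift_le_trans S'leT TleS.
by apply: contra_neq TneS => eqS'; apply: (shift_le_anti TleS); rewrite -eqS'.
Qed.

Lemma left_shift_lt S S' : left_shift S S' -> shift_le S S' /\ S' != S.
Proof.
move=> [T [ST TS']]; have [SleT TneS] := direct_left_shift_le ST.
have TleS' := connect_left_shift_le TS'.
split; first exact: shift_le_trans SleT TleS'.
by apply: contra_neq TneS => eqS'; apply: (shift_le_anti _ SleT); rewrite -eqS'.
Qed.

Lemma direct_right_shiftC S T :
  direct_right_shift (~: S) T -> direct_left_shift S (~: T).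
Proof.
move=> /existsP[m /existsP[m' /and4P[/eqP mm' mS m'S /eqP ->]]].
apply/existsP; exists m'; apply/existsP; exists m.
rewrite inE in mS; rewrite inE negbK in m'S.
have m_neq : m != m' by apply/eqP => mE; move: mm'; rewrite mE; lia.
rewrite mm' eqxx m'S mS /=; apply/eqP/setP => x; rewrite !inE.
case: (eqVneq x m) => [->|xm]; first by rewrite (negbTE m_neq) mS.
by case: (eqVneq x m') => [->|xm'] //=; rewrite negbK.
Qed.

Lemma shift_le_exchange (i j : 'I_n) S : i <= j -> S \subset ~: [set i; j] ->
  shift_le (j |: S) (i |: S).
Proof.
move=> ij /subsetP Sij k _.
have iS : i \notin S by apply/negP => /Sij; rewrite !inE eqxx.
have jS : j \notin S by apply/negP => /Sij; rewrite !inE eqxx orbT.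
by rewrite !prefix_countU1 //; lia.
Qed.

(* Remove the player j of S right after the last prefix j on which g and S
   have equal counts; beyond j, g lags behind S by at least one. *)
Lemma shift_lt_cover_delete g S : shift_le g S ->
  prefix_count g n < prefix_count S n -> exists2 x, x \in S & shift_le g (S :\ x).
Proof.
move=> gS gSn.
have [j /andP[jn /eqP gSj] jmax] :=
  @ex_maxn_le (fun j => (j <= n) && (prefix_count g j == prefix_count S j)) n
    (ex_intro _ 0 (eqxx 0)) (fun i h => proj1 (andP h)).
have jn' : j < n by rewrite ltn_neqAle jn andbT; apply/negP => /eqP jE; move: gSj gSn; rewrite jE; lia.
have gSj1 : prefix_count g j.+1 < prefix_count S j.+1.
  rewrite ltn_neqAle gS // andbT; apply/negP => eqj1.
  by have := jmax j.+1; rewrite jn' eqj1 => /(_ isT); lia.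
have jS : Ordinal jn' \in S.
  rewrite -mem_nat_ord /=; case Sj: (mem_nat S j) => //.
  by move: gSj1; rewrite !prefix_countS Sj; have := prefix_countS_leq g j; lia.
exists (Ordinal jn') => // k kn; move: (prefix_countD1 k jS) => /=.
case: (leqP k j) => [kj|jk]; first by rewrite addn0 => <-; exact: gS.
rewrite addn1 => Sk; have : prefix_count g k < prefix_count S k.
  rewrite ltn_neqAle gS // andbT; apply/negP => eqk.
  by have := jmax k; rewrite kn eqk => /(_ isT); lia.
by rewrite Sk ltnS.
Qed.

(* With equal totals, let k be the last prefix on which g lags behind S; then
   player k is not in S, and moving the last member j < k of S to j+1 lowers
   only the count of prefix j+1, on which g still lags behind S. *)
Lemma shift_lt_cover_shift g S : shift_le g S -> g != S ->
  prefix_count g n = prefix_count S n ->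
  exists2 T, direct_right_shift S T & shift_le g T.
Proof.
move=> gS gneS gSn.
have [k0 k0n gSk0] := shift_lt_witness gS gneS.
have [k /andP[kn gSk] kmax] :=
  @ex_maxn_le (fun k => (k <= n) && (prefix_count g k < prefix_count S k)) n
    (ex_intro _ k0 (introT andP (conj k0n gSk0))) (fun i h => proj1 (andP h)).
have kn' : k < n by rewrite ltn_neqAle kn andbT; apply/negP => /eqP kE; move: gSk; rewrite kE gSn ltnn.
have gSk1 : prefix_count g k.+1 = prefix_count S k.+1.
  apply/eqP; rewrite eqn_leq gS //= leqNgt; apply/negP => lt1.
  by have := kmax k.+1; rewrite kn' lt1 => /(_ isT); lia.
have Sk : mem_nat S k = false.
  case Sk: (mem_nat S k) => //; move: gSk1; rewrite !prefix_countS Sk.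
  by have := prefix_countS_leq g k; lia.
have [j [jk Sj Sj1 Sconst]] := last_mem_shiftable Sk ltac:(lia).
have jn : j < n by lia.
have j1n : j.+1 < n by lia.
have jS : Ordinal jn \in S by rewrite -mem_nat_ord.
have j1S : Ordinal j1n \notin S by rewrite -mem_nat_ord /= Sj1.
exists (Ordinal j1n |: (S :\ Ordinal jn)).
  by apply/existsP; exists (Ordinal jn); apply/existsP; exists (Ordinal j1n); rewrite /= eqxx jS j1S eqxx.
move=> i iln; move: (prefix_countD1 i jS) => /=.
rewrite prefix_countU1 /=; last by rewrite in_setD1 negb_and j1S orbT.
case: (ltngtP i j.+1) => [ij|ji|->] Si.
- by move: Si; rewrite !addn0 => <-; exact: gS.
- by move: Si => <-; exact: gS.
- rewrite addn0 (_ : prefix_count (_ :\ _) _ = (prefix_count S j.+1).-1); last by rewrite Si addn1.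
  by move: gSk Sconst (leq_prefix_count g jk); lia.
Qed.

Lemma shift_lt_cover g S : shift_le g S -> g != S ->
  exists2 T, shift_le g T & T \proper S \/ direct_right_shift S T.
Proof.
move=> gS gneS; case: (ltngtP (prefix_count g n) (prefix_count S n)) => [gSn|Sgn|gSn].
- have [x xS gSx] := shift_lt_cover_delete gS gSn.
  by exists (S :\ x) => //; left; exact: properD1.
- by move: (gS n (leqnn n)); rewrite leqNgt Sgn.
- by have [T ST gT] := shift_lt_cover_shift gS gneS gSn; exists T => //; right.
Qed.
End Shifts.

Section ShiftGames.
Variable n : nat.
Implicit Types S T g : {set 'I_n}.
Implicit Types A : {set {set 'I_n}}.

Definition shift_leb S T := [forall k : 'I_n.+1, prefix_count S k <= prefix_count T k].

Lemma shift_leP S T : reflect (shift_le S T) (shift_leb S T).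
Proof.
apply: (iffP forallP) => [ST k kn|ST k]; last by apply: ST; rewrite -ltnS.
exact: (ST (Ordinal (n:=n.+1) (m:=k) kn)).
Qed.

Definition up_game A S := [exists g in A, shift_leb g S].
Definition down_game A S := ~~ [exists g in A, shift_leb S (~: g)].

Lemma up_gameP A S : reflect (exists2 g, g \in A & shift_le g S) (up_game A S).
Proof.
apply: (iffP existsP) => [[g /andP[gA /shift_leP gS]]|[g gA gS]]; exists g => //.
by rewrite gA; apply/shift_leP.
Qed.

Lemma down_gamePn A S :
  reflect (exists2 g, g \in A & shift_le S (~: g)) (~~ down_game A S).
Proof.
rewrite negbK; apply: (iffP existsP) => [[g /andP[gA /shift_leP Sg]]|[g gA Sg]].
  by exists g.
by exists g; rewrite gA; apply/shift_leP.
Qed.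

Lemma up_game_canonical A : canonical_linear_game (up_game A).
Proof.
split=> [S T ST | i j ij S Sij]; apply: leq_bool => /up_gameP[g gA gS];
  apply/up_gameP; exists g => //; apply: shift_le_trans gS _.
  exact: subset_shift_le.
exact: shift_le_exchange.
Qed.

Lemma down_game_canonical A : canonical_linear_game (down_game A).
Proof.
split=> [S T ST | i j ij S Sij]; apply: leq_bool; apply: contraLR => /down_gamePn[g gA Tg];
  apply/down_gamePn; exists g => //; apply: shift_le_trans Tg.
  exact: subset_shift_le.
exact: shift_le_exchange.
Qed.

Lemma roof_up_game A S : roof (up_game A) S -> S \in A.
Proof.
move=> [[/up_gameP[g gA gS] Smin] Sroof].
have [<- //|gneS] := eqVneq g S.
have [T gT [TS|ST]] := shift_lt_cover gS gneS.
  by case/negP: (Smin T TS); apply/up_gameP; exists g.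
have /Sroof/negP[] : right_shift S T by exists T; split=> //; exact: connect0.
by apply/up_gameP; exists g.
Qed.

Lemma ceiling_down_game A S : ceiling (down_game A) S -> ~: S \in A.
Proof.
move=> [[/down_gamePn[g gA Sg] Smax] Sceil].
have gS : shift_le g (~: S) by rewrite -[g]setCK; exact: shift_leC.
have [<- //|gneS] := eqVneq g (~: S).
have [T gT TS] := shift_lt_cover gS gneS.
suff /negP[] : ~~ down_game A (~: T).
  case: TS => [TS|ST]; first by apply: Smax; rewrite -properC setCK.
  by apply: Sceil; exists (~: T); split; [exact: direct_right_shiftC | exact: connect0].
by apply/down_gamePn; exists g => //; exact: shift_leC.
Qed.

Section ExtremalCoalition.
Variables (A : {set {set 'I_n}}) (C : {set 'I_n}).
Hypothesis A_not_below : forall g, g \in A -> ~ shift_le g C.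
Hypothesis A_below_above : forall T, shift_le C T -> T != C -> exists2 g, g \in A & shift_le g T.

Lemma ceiling_up_game : ceiling (up_game A) C.
Proof.
split; first split.
- by apply/negP => /up_gameP[g gA gC]; exact: A_not_below gA gC.
- move=> T CT; apply/up_gameP; apply: A_below_above.
    by apply: subset_shift_le; exact: proper_sub CT.
  by apply: contraTneq CT => ->; rewrite properxx.
- by move=> S' /left_shift_lt[CS' S'neC]; apply/up_gameP; exact: A_below_above.
Qed.

Lemma roof_down_game : roof (down_game A) (~: C).
Proof.
have below_win T : shift_le T (~: C) -> T != ~: C -> ~~ down_game A T.
  move=> TC TneC; apply/down_gamePn.
  have CT : shift_le C (~: T) by rewrite -[C]setCK; exact: shift_leC.
  have [|g gA gT] := A_below_above CT; first by apply: contra_neq TneC => <-; rewrite setCK.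
  by exists g => //; rewrite -[T]setCK; exact: shift_leC.
split; first split.
- apply: contraT => /down_gamePn[g gA Cg]; case: (A_not_below gA).
  by rewrite -[g]setCK -[C]setCK; exact: shift_leC.
- move=> T TC; apply: below_win; first by apply: subset_shift_le; exact: proper_sub TC.
  by apply: contraTneq TC => ->; rewrite properxx.
- by move=> S' /right_shift_lt[S'C S'neC]; exact: below_win.
Qed.

End ExtremalCoalition.
End ShiftGames.

Lemma div2_even b : (2 * b) %/ 2 = b. Proof. lia. Qed.
Lemma mod2_even b : (2 * b) %% 2 = 0. Proof. lia. Qed.
Lemma div2_odd b : (2 * b + 1) %/ 2 = b. Proof. lia. Qed.
Lemma mod2_odd b : (2 * b + 1) %% 2 = 1. Proof. lia. Qed.

Section PairedCoalitions.
Variable n : nat.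

Definition nat_set (P : pred nat) : {set 'I_n} := [set i : 'I_n | P i].

Lemma prefix_count_nat_setS P k :
  k < n -> prefix_count (nat_set P) k.+1 = prefix_count (nat_set P) k + P k.
Proof. by move=> kn; rewrite prefix_countS -[k]/(val (Ordinal kn)) mem_nat_ord inE. Qed.

(* Players 2b and 2b+1 form the b-th pair; [pick_pair L] takes the first
   player of pair b if [L b] holds, and the second one otherwise. *)
Definition pick_pair (L : pred nat) : pred nat :=
  fun j => if j %% 2 == 0 then L (j %/ 2) else ~~ L (j %/ 2).

Lemma pick_pair_even L b : pick_pair L (2 * b) = L b.
Proof. by rewrite /pick_pair mod2_even div2_even. Qed.

Lemma pick_pair_odd L b : pick_pair L (2 * b + 1) = ~~ L b.
Proof. by rewrite /pick_pair mod2_odd div2_odd. Qed.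

Lemma prefix_count_pick_pair_even L b :
  2 * b <= n -> prefix_count (nat_set (pick_pair L)) (2 * b) = b.
Proof.
elim: b => [|b IH] bn; first by rewrite muln0.
rewrite mulnS add2n !prefix_count_nat_setS ?IH; try lia.
by rewrite -[(2 * b).+1]addn1 pick_pair_even pick_pair_odd; case: (L b); lia.
Qed.

Lemma prefix_count_pick_pair_odd L b :
  2 * b + 1 <= n -> prefix_count (nat_set (pick_pair L)) (2 * b + 1) = b + L b.
Proof.
move=> bn; rewrite addn1 prefix_count_nat_setS ?prefix_count_pick_pair_even ?pick_pair_even //.
all: lia.
Qed.

End PairedCoalitions.

Lemma pick_pair_partner L b b' :
  b' %/ 2 = b %/ 2 -> b' != b -> pick_pair L b' = ~~ pick_pair L b.
Proof.
move=> bb' /eqP b'neb; rewrite /pick_pair bb'.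
case: (eqVneq (b %% 2) 0) => b2; case: (eqVneq (b' %% 2) 0) => b'2 /=;
  rewrite ?negbK //; exfalso; lia.
Qed.

Section Construction.
Variable p : nat.
Local Notation n := (4 * p).

(* Pairs 2i and 2i+1 form the i-th quad. The coalition of a bit tuple t takes
   the first player in exactly one pair of each quad, chosen by t; the
   generators are the coalitions taking the first player in both pairs of a
   quad ([quad_gen]), or both players of a pair and none of the next one
   ([gap_gen]), and otherwise second players only. *)
Definition quad_bits (t : p.-tuple bool) : pred nat := pick_pair (fun i => ~~ nth false t i).
Definition bits_coalition t : {set 'I_n} := nat_set n (pick_pair (quad_bits t)).
Definition quad_gen (i : nat) : {set 'I_n} := nat_set n (pick_pair (fun b => b %/ 2 == i)).
Definition gap_gen (b0 : nat) : {set 'I_n} :=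
  nat_set n (fun j => (j %/ 2 == b0) || (j %/ 2 != b0.+1) && (j %% 2 == 1)).
Definition generators : {set {set 'I_n}} :=
  [set quad_gen i | i : 'I_p] :|: [set gap_gen b | b : 'I_(2 * p)].

Lemma prefix_count_gap_gen_even b0 b :
  2 * b <= n -> prefix_count (gap_gen b0) (2 * b) = b + (b == b0.+1).
Proof.
elim: b => [|b IH] bn; first by rewrite muln0.
by rewrite mulnS add2n !prefix_count_nat_setS ?IH; lia.
Qed.

Lemma prefix_count_gap_gen_odd b0 b : 2 * b + 1 <= n ->
  prefix_count (gap_gen b0) (2 * b + 1) = b + (b == b0.+1) + (b == b0).
Proof.
by move=> bn; rewrite addn1 prefix_count_nat_setS ?prefix_count_gap_gen_even; lia.
Qed.

Lemma generator_not_below t g : g \in generators -> ~ shift_le g (bits_coalition t).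
Proof.
case/setUP => /imsetP[i _ ->] gt.
- have [b b2i tb] : exists2 b, b %/ 2 = i & quad_bits t b = false.
    case ti: (nth false t i).
      by exists (2 * i); rewrite ?div2_even // /quad_bits pick_pair_even ti.
    by exists (2 * i + 1); rewrite ?div2_odd // /quad_bits pick_pair_odd ti.
  have bn : 2 * b + 1 <= n by have := ltn_ord i; lia.
  move: (gt _ bn); rewrite /quad_gen /bits_coalition !prefix_count_pick_pair_odd //.
  by rewrite b2i eqxx tb; lia.
- have bn : 2 * i.+1 <= n by have := ltn_ord i; lia.
  move: (gt _ bn); rewrite prefix_count_gap_gen_even // prefix_count_pick_pair_even //.
  by rewrite eqxx; lia.
Qed.

Lemma gap_gen_below t T b : b < 2 * p -> shift_le (bits_coalition t) T ->
  b.+2 <= prefix_count T (2 * b + 2) -> shift_le (gap_gen b) T.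
Proof.
move=> bp tT Tb k.
have [b' [->|->]] : exists b', k = 2 * b' \/ k = 2 * b' + 1 by exists (k %/ 2); lia.
- move=> kn; rewrite prefix_count_gap_gen_even //; move: (tT _ kn).
  rewrite /bits_coalition prefix_count_pick_pair_even //.
  case: (eqVneq b' b.+1) => [->|_]; last by lia.
  by rewrite [2 * b.+1](_ : _ = 2 * b + 2); lia.
- move=> kn; rewrite prefix_count_gap_gen_odd //; move: (tT _ kn).
  rewrite /bits_coalition prefix_count_pick_pair_odd //.
  case: (eqVneq b' b) => [->|b'neb].
    by move: (prefix_countS_leq T (2 * b + 1)); rewrite [(2 * b + 1).+1](_ : _ = 2 * b + 2); lia.
  case: (eqVneq b' b.+1) => [->|]; last by lia.
  by move: (@leq_prefix_count _ T (2 * b + 2) (2 * b.+1 + 1) ltac:(lia)); lia.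
Qed.

Lemma quad_gen_below t T b : b < 2 * p -> shift_le (bits_coalition t) T ->
  quad_bits t b = false -> b.+1 <= prefix_count T (2 * b + 1) ->
  shift_le (quad_gen (b %/ 2)) T.
Proof.
move=> bp tT tb Tb k.
have [b' [->|->]] : exists b', k = 2 * b' \/ k = 2 * b' + 1 by exists (k %/ 2); lia.
- move=> kn; rewrite /quad_gen prefix_count_pick_pair_even //; move: (tT _ kn).
  by rewrite /bits_coalition prefix_count_pick_pair_even.
- move=> kn; rewrite /quad_gen prefix_count_pick_pair_odd //; move: (tT _ kn).
  rewrite /bits_coalition prefix_count_pick_pair_odd //.
  case: (eqVneq (b' %/ 2) (b %/ 2)) => [bb'|] /=; last by lia.
  case: (eqVneq b' b) => [->|b'neb]; first by lia.
  have tb' : quad_bits t b' = ~~ quad_bits t b by exact: pick_pair_partner.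
  by rewrite tb' tb; lia.
Qed.

Lemma bits_coalition_cover t T : shift_le (bits_coalition t) T ->
  T != bits_coalition t -> exists2 g, g \in generators & shift_le g T.
Proof.
move=> tT Tnet.
have [k kn tTk] : exists2 k, k <= n &
    prefix_count (bits_coalition t) k < prefix_count T k.
  by apply: shift_lt_witness tT _; rewrite eq_sym.
have k_gt0 : 0 < k by case: (posnP k) tTk => [->|] //; rewrite ltnn.
have [b [kE|kE]] : exists b, k = 2 * b + 2 \/ k = 2 * b + 1 by exists ((k - 1) %/ 2); lia.
- have bp : b < 2 * p by lia.
  exists (gap_gen b); first by apply/setUP; right; apply/imsetP; exists (Ordinal bp).
  apply: gap_gen_below bp tT _; move: tTk.
  rewrite kE [2 * b + 2](_ : _ = 2 * b.+1); last by lia.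
  by rewrite /bits_coalition prefix_count_pick_pair_even; lia.
- have bp : b < 2 * p by lia.
  move: tTk; rewrite kE /bits_coalition prefix_count_pick_pair_odd; last by lia.
  case tb: (quad_bits t b) => tTk.
    exists (gap_gen b); first by apply/setUP; right; apply/imsetP; exists (Ordinal bp).
    apply: gap_gen_below bp tT _.
    by move: (@leq_prefix_count _ T (2 * b + 1) (2 * b + 2) ltac:(lia)); lia.
  have b2p : b %/ 2 < p by lia.
  exists (quad_gen (b %/ 2)); first by apply/setUP; left; apply/imsetP; exists (Ordinal b2p).
  by apply: quad_gen_below bp tT tb _; lia.
Qed.

Lemma bits_coalition_inj : injective bits_coalition.
Proof.
move=> t1 t2 t12; apply: eq_from_tnth => i; rewrite !(tnth_nth false).
have i4n : 4 * i < n by have := ltn_ord i; lia.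
have : Ordinal i4n \in bits_coalition t1 = (Ordinal i4n \in bits_coalition t2) by rewrite t12.
rewrite !inE /= [4 * i](_ : _ = 2 * (2 * i)); last by lia.
by rewrite /quad_bits !pick_pair_even; case: (nth false t1 i); case: (nth false t2 i).
Qed.

Lemma card_generators : #|generators| <= 3 * p.
Proof.
rewrite -[3 * p]/(p + 2 * p); apply: leq_trans (leq_card_setU _ _) _.
by apply: leq_add; apply: leq_trans (leq_imset_card _ _) _; rewrite card_ord.
Qed.
End Construction.

Section TapeBound.
Variables q k : nat.
Variable delta : tm_delta q k.

Definition tape_size (cf : config q k) := let: (_, l, _, r) := cf in size l + size r + 1.

Lemma tape_size_step cf cf' : tm_step delta cf = Some cf' -> tape_size cf' <= tape_size cf + 1.
Proof.
case: cf => [[[st l] c] r] /=; case: (delta st c) => [[[st' w] mv]|] //= [<-].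
by case: mv => /=; [case: r | case: l] => /= *; lia.
Qed.

Lemma tape_size_run f cf cf' :
  tm_run delta f cf = Some cf' -> tape_size cf' <= tape_size cf + f.
Proof.
elim: f cf => //= f IH cf; case cf1E: (tm_step delta cf) => [cf1|].
  by move/IH; have := tape_size_step cf1E; lia.
by move=> [<-]; lia.
Qed.

Lemma size_tm_output cf : size (tm_output cf) <= tape_size cf.
Proof.
case: cf => [[[st l] c] r] /=.
rewrite /strip_blanks /drop_blanks size_rev size_drop size_rev size_drop.
by rewrite size_cat size_rev /=; lia.
Qed.

Lemma tape_size_init w : tape_size (tm_init q w) <= size w + 1.
Proof. by case: w => //= a w; rewrite size_behead /=; lia. Qed.

End TapeBound.

Lemma size_enc_list k n (s : seq {set 'I_n}) : size (enc_list k s) = size s * n.+1.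
Proof.
elim: s => //= X s IH; rewrite /enc_list /= size_cat -/(enc_list k s) IH.
by rewrite /enc_set size_cat size_map size_enum_ord /=; lia.
Qed.

Lemma size_enc_input k n (s : seq {set 'I_n}) : size (enc_input k s) = n.+1 + size s * n.+1.
Proof. by rewrite /enc_input size_cat size_nseq /= size_enc_list; lia. Qed.

Lemma exists_uniq_filter (T : eqType) (P : T -> Prop) (l : seq T) :
  exists2 s, uniq s & (forall x, x \in s <-> P x /\ x \in l) /\ size s <= size l.
Proof.
elim: l => [|a l [s s_uniq [sP sl]]].
  by exists [::] => //; split => // x; split => // -[].
have [[Pa as_]|Pas] : (P a /\ a \notin s) \/ (P a -> a \in s).
  case: (classic (P a)) => [Pa|nPa]; last by right.
  by case: (boolP (a \in s)) => as_; [right | left].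
- exists (a :: s); first by rewrite /= as_.
  split=> [x|/=]; last by lia.
  rewrite !in_cons; split => [/orP[/eqP->|/sP[Px ->]]|[Px /orP[/eqP->|xl]]].
  + by rewrite eqxx.
  + by rewrite orbT.
  + by rewrite eqxx.
  + by apply/orP; right; apply/sP.
- exists s => //; split=> [x|/=]; last by lia.
  rewrite in_cons; split => [/sP[Px ->]|[Px /orP[/eqP xa|xl]]]; first by rewrite orbT.
    by subst x; exact: Pas.
  exact/sP.
Qed.

Lemma leq_expn2r m1 m2 e : m1 <= m2 -> m1 ^ e <= m2 ^ e.
Proof. by move=> m12; elim: e => // e IH; rewrite !expnS leq_mul. Qed.

Lemma poly_lt_exp2 C D : exists p, C * p.+1 ^ D < 2 ^ p.
Proof.
set K := C + 2 * D + 1.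
have K_lt : K < 2 ^ K by apply: ltn_expl.
have C_lt : C < 2 ^ C by apply: ltn_expl.
exists (2 ^ (2 * K)).-1; rewrite prednK ?expn_gt0 // -expnM.
apply: leq_trans (_ : 2 ^ C * 2 ^ (2 * K * D) <= _); first by rewrite ltn_pmul2r ?expn_gt0.
rewrite -expnD leq_exp2l // -ltnS prednK ?expn_gt0 // mul2n -addnn expnD.
by move: K_lt; set X := 2 ^ K; nia.
Qed.

Lemma converter_output_size inP outP q k (delta : tm_delta q k) c d :
  poly_time_converts inP outP delta c d ->
  forall n (v : {set 'I_n} -> bool), canonical_linear_game v ->
  forall s : seq {set 'I_n}, uniq s -> (forall X, X \in s <-> inP n v X) ->
  exists2 s' : seq {set 'I_n}, (forall X, outP n v X -> X \in s') &
    size s' * n.+1 <= size (enc_input k s) + c * (size (enc_input k s)).+1 ^ d + 2.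
Proof.
move=> conv n v vclg s s_uniq sP.
have [t [t_le [cf [run [s' [_ [s'P out]]]]]]] := conv n v vclg s s_uniq sP.
exists s'; first by move=> X /s'P.
rewrite -(size_enc_list k) -out.
move: (size_tm_output cf) (tape_size_run run) (tape_size_init q (enc_input k s)) t_le.
lia.
Qed.

Lemma no_poly_time_converter (inP outP : forall n, ({set 'I_n} -> bool) -> {set 'I_n} -> Prop) :
  (forall p, exists v : {set 'I_(4 * p)} -> bool, canonical_linear_game v /\
     (exists A : {set {set 'I_(4 * p)}}, #|A| <= 3 * p /\ forall X, inP _ v X -> X \in A) /\
     (exists O : {set {set 'I_(4 * p)}}, 2 ^ p <= #|O| /\ forall X, X \in O -> outP _ v X)) ->
  ~ exists q k (delta : tm_delta q k) c d, poly_time_converts inP outP delta c d.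
Proof.
move=> family [q [k [delta [c [d conv]]]]].
have [p p_large] := poly_lt_exp2 (14 + c * 12 ^ d) (2 * d + 2).
have [v [vclg [[A [A_small inA]] [O [O_large outO]]]]] := family p.
have [s s_uniq [sP s_size]] := exists_uniq_filter (inP _ v) (enum A).
have sin : forall X, X \in s <-> inP _ v X.
  by move=> X; rewrite sP mem_enum; split=> [[] //|inX]; split=> //; exact: inA.
have [s' s'_out s'_size] := converter_output_size conv vclg s_uniq sin.
have O_s' : #|O| <= size s'.
  by rewrite cardE; apply: uniq_leq_size (enum_uniq _) _ => X; rewrite mem_enum => /outO/s'_out.
have s_small : size s <= 3 * p by rewrite (leq_trans s_size) // -cardE.
rewrite size_enc_input in s'_size.
set W := (4 * p).+1 + size s * (4 * p).+1 in s'_size.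
have W_le : W.+2 <= 12 * p.+1 ^ 2 by rewrite /W; nia.
have Y_le : p.+1 ^ 2 <= p.+1 ^ (2 * d + 2) by apply: leq_pexp2l => //; lia.
have G_le : W.+1 ^ d <= 12 ^ d * p.+1 ^ (2 * d + 2).
  apply: leq_trans (leq_expn2r d (_ : W.+1 <= 12 * p.+1 ^ 2)) _; first lia.
  by rewrite expnMn -expnM leq_mul2l leq_pexp2l ?orbT //; lia.
have s'_le : size s' <= size s' * (4 * p).+1 by rewrite leq_pmulr.
move: p_large (leq_trans O_large O_s') (leq_mul (leqnn c) G_le).
set Z := p.+1 ^ (2 * d + 2); set F := 12 ^ d; set G := W.+1 ^ d; set E := 2 ^ p.
lia.
Qed.

Theorem corollary4 :
  (~ exists (q k : nat) (delta : tm_delta q k) (c d : nat),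
       poly_time_converts (@ceiling) (@roof) delta c d) /\
  (~ exists (q k : nat) (delta : tm_delta q k) (c d : nat),
       poly_time_converts (@roof) (@ceiling) delta c d).
Proof.
split; apply: no_poly_time_converter => p.
- exists (down_game (generators p)); split; first exact: down_game_canonical.
  split.
    exists [set ~: g | g in generators p]; split.
      by rewrite (leq_trans (leq_imset_card _ _)) ?card_generators.
    by move=> X /ceiling_down_game XC; apply/imsetP; exists (~: X); rewrite ?setCK.
  exists [set ~: bits_coalition t | t in [set: p.-tuple bool]]; split.
    rewrite card_imset ?cardsT ?card_tuple ?card_bool //.
    by move=> t1 t2 /setC_inj/bits_coalition_inj.
  move=> X /imsetP[t _ ->]; apply: roof_down_game => [g|T].
    exact: generator_not_below.
  exact: bits_coalition_cover.
- exists (up_game (generators p)); split; first exact: up_game_canonical.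
  split; first by exists (generators p); split; [exact: card_generators | move=> X /roof_up_game].
  exists [set bits_coalition t | t in [set: p.-tuple bool]]; split.
    by rewrite card_imset ?cardsT ?card_tuple ?card_bool //; exact: bits_coalition_inj.
  move=> X /imsetP[t _ ->]; apply: ceiling_up_game => [g|T].
    exact: generator_not_below.
  exact: bits_coalition_cover.
Qed.
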